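(* Let $F = x_0^a(x_1^b+\cdots+x_n^b)\in k[x_0,\ldots,x_n]$ with $a\ge1$, $a+1 \leq b$ and $n \geq3$. If $\mathbb X\subset\mathbb{P}^n$ is a finite set of distinct points apolar to $F$, then $|\mathbb X \setminus \{X_i=0\}| \geq b$ for all $i=1,\ldots,n$.
   Context: $k$ is algebraically closed of characteristic zero, $T=k[X_0,\ldots,X_n]$ acts on $S=k[x_0,\ldots,x_n]$ by differentiation ($X_i\circ F=\partial F/\partial x_i$), and $F^\perp=\{g\in T:g\circ F=0\}$. A finite set $\mathbb{X}$ of points of $\mathbb{P}^n$ (with coordinates $X_0,\ldots,X_n$) is apolar to $F$ if its homogeneous ideal $I_{\mathbb{X}}\subseteq T$ satisfies $I_{\mathbb{X}}\subseteq F^\perp$. $\{X_i=0\}$ denotes the coordinate hyperplane. *)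

From HB Require Import structures.
From mathcomp Require Import all_boot all_order all_algebra.
From mathcomp Require Import mpoly.
Set Implicit Arguments. Unset Strict Implicit. Unset Printing Implicit Defensive.
Import GRing.Theory.
Local Open Scope ring_scope.

(* Polynomial rings S = k[x_0..x_n] and T = k[X_0..X_n] are both modelled as
   {mpoly k[n.+1]} (variables indexed by 'I_n.+1). *)

(* Apolarity action: g o F = sum_m g_m * (d^m F), X_i acting as d/dx_i. *)
Definition contract (N : nat) (k : ringType) (g F : {mpoly k[N]}) : {mpoly k[N]} :=
  \sum_(m <- msupp g) g@_m *: F^`M[m].

Definition perp (N : nat) (k : ringType) (F : {mpoly k[N]}) : {mpoly k[N]} -> Prop :=
  fun g => contract g F = 0.

(* A finite set of points of P^(N-1) given by representatives P j (j < m):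
   each representative is a nonzero vector, and distinct indices give
   distinct points (representatives are not proportional). *)
Definition distinct_points (N m : nat) (k : ringType) (P : 'I_m -> 'I_N -> k) : Prop :=
  (forall j, exists l, P j l != 0) /\
  (forall j j', j != j' -> forall c : k, ~ (forall l, P j l = c * P j' l)).

Definition ideal_of_points (N m : nat) (k : comRingType) (P : 'I_m -> 'I_N -> k)
  : {mpoly k[N]} -> Prop :=
  fun g => forall (d : nat) (j : 'I_m), (pihomog mdeg d g).@[P j] = 0.

Definition apolar (N m : nat) (k : comRingType) (P : 'I_m -> 'I_N -> k)
  (F : {mpoly k[N]}) : Prop :=
  forall g, ideal_of_points P g -> perp F g.

Definition Fab (n a b : nat) (k : ringType) : {mpoly k[n.+1]} :=
  'X_ord0 ^+ a * \sum_(i < n.+1 | i != ord0) 'X_i ^+ b.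

From HB Require Import structures.
From mathcomp Require Import all_boot all_order all_algebra.
From mathcomp Require Import mpoly zify.
Set Implicit Arguments. Unset Strict Implicit. Unset Printing Implicit Defensive.
Local Open Scope ring_scope.
Import GRing.Theory.

(* Suppose only r < b points P_j of X have P_j(i) != 0. Take one linear form
   through each such point that is not the coordinate point e_i, namely
   P_j(l) X_i - P_j(i) X_l with l != i and P_j(l) != 0, and multiply their
   product by X_0 X_i: the result g is homogeneous and vanishes on X, so it
   lies in I_X and hence g o F = 0. But X_0 X_i^(r+1) occurs in g, and the
   coefficient of x_0^(a-1) x_i^(b-r-1) in g o F only receives a contribution
   from this monomial: every monomial of g contains X_i, and the only monomial
   of F containing x_i is x_0^a x_i^b. In characteristic 0 that contribution
   is nonzero, a contradiction. *)

Lemma ideal_of_points_dhomog (N m : nat) (k : comNzRingType)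
    (P : 'I_m -> 'I_N -> k) (g : {mpoly k[N]}) (d : nat) :
  g \is d.-homog -> (forall j, g.@[P j] = 0) -> ideal_of_points P g.
Proof.
move=> homg g0 e j; have [<-|ne] := eqVneq d e; first by rewrite pihomog_dE.
by rewrite (pihomog_ne0 ne homg) meval0.
Qed.

Lemma mcoeff_contract_neq0 (N : nat) (k : idomainType) (g F : {mpoly k[N]})
    (t m0 : 'X_{1..N}) :
  [pchar k] =i pred0 -> g@_m0 != 0 -> F@_(m0 + t) != 0 ->
  {in msupp g, forall m, m != m0 -> F@_(m + t) = 0} ->
  (contract g F)@_t != 0.
Proof.
move=> hchar gm0 Fm0 F0.
rewrite /contract raddf_sum /= (bigD1_seq m0) ?msupp_uniq ?mcoeff_msupp //=.
rewrite big1_seq ?addr0 => [|m /andP [ne hm]]; last first.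
  by rewrite mcoeffZ mcoeff_mderivm F0 // mul0rn mulr0.
rewrite mcoeffZ mcoeff_mderivm mulf_neq0 // -mulr_natr mulf_neq0 //.
move/(pcharf0P k): hchar => ->; rewrite -lt0n prodn_gt0 // => l.
by rewrite ffact_gt0 mnmDE leq_addr.
Qed.

Section ProductOfLinearForms.
Variables (N : nat) (R : comNzRingType) (T : eqType).
Variables (i : 'I_N) (alpha beta : T -> R) (ell : T -> 'I_N).

Lemma mcoeffMXU_eq0 (h : {mpoly R[N]}) (l : 'I_N) (u : 'X_{1..N}) :
  u l = 0%N -> (h * 'X_[U_(l)])@_u = 0.
Proof.
move=> ul0; apply/eqP; rewrite mcoeff_eq0; apply/negP.
rewrite (perm_mem (msuppMX h U_(l))) => /mapP [u' _ eu].
by move: ul0; rewrite eu mnmDE mnm1E eqxx.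
Qed.

Lemma dhomog_prod_linear (s : seq T) :
  \prod_(x <- s) (alpha x *: 'X_i - beta x *: 'X_(ell x)) \is (size s).-homog.
Proof.
elim: s => [|x s IH]; first by rewrite big_nil dhomog1.
rewrite big_cons /= -add1n; apply: dhomogM => //.
by apply: rpredB; apply: rpredZ; rewrite dhomogX; apply/eqP; apply: mdeg1.
Qed.

Lemma mcoeff_prod_linear (s : seq T) : {in s, forall x, ell x != i} ->
  (\prod_(x <- s) (alpha x *: 'X_i - beta x *: 'X_(ell x)))@_(U_(i) *+ size s)
    = \prod_(x <- s) alpha x.
Proof.
elim: s => [|x s IH] ell_i; first by rewrite !big_nil mulm0n mcoeff1 eqxx.
rewrite !big_cons /= mulrBl -!scalerAl mcoeffB !mcoeffZ.
rewrite [('X_i * _)]mulrC [('X_(ell x) * _)]mulrC mulmS mcoeffMX mcoeffMXU_eq0.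
  by rewrite mulr0 subr0 IH // => y sy; apply: ell_i; rewrite in_cons sy orbT.
by rewrite mnmDE !mulmnE !mnm1E eq_sym (negbTE (ell_i x _)) ?mem_head.
Qed.

End ProductOfLinearForms.

Lemma mcoeff_Fab (n a b : nat) (k : comNzRingType) (u : 'X_{1..n.+1}) :
  (Fab n a b k)@_u
    = \sum_(l < n.+1 | l != ord0) (u == U_(ord0) *+ a + U_(l) *+ b)%MM%:R.
Proof.
rewrite /Fab mulr_sumr raddf_sum /=; apply: eq_bigr => l _.
by rewrite !mpolyXn -mpolyXD mcoeffX eq_sym.
Qed.

Lemma mcoeff_Fab_neq0 (n a b : nat) (k : comNzRingType) (u : 'X_{1..n.+1}) :
  (Fab n a b k)@_u != 0 ->
  exists2 l : 'I_n.+1, l != ord0 & u = (U_(ord0) *+ a + U_(l) *+ b)%MM.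
Proof.
pose e (l : 'I_n.+1) := (U_(ord0) *+ a + U_(l) *+ b)%MM.
have [l /andP [l0 /eqP ->] _|none] := pickP [pred l | (l != ord0) && (u == e l)].
  by exists l.
rewrite mcoeff_Fab big1 ?eqxx // => l l0.
by move: (none l); rewrite /= l0 => /= ->.
Qed.

Lemma mcoeff_Fab_pure (n a b : nat) (k : comNzRingType) (i : 'I_n.+1) :
  (0 < b)%N -> i != ord0 -> (Fab n a b k)@_(U_(ord0) *+ a + U_(i) *+ b)%MM = 1.
Proof.
move=> b_gt0 i0; rewrite mcoeff_Fab (bigD1 i) //= eqxx big1 ?addr0 //.
move=> l /andP [l0 li]; case: eqP => // E.
move: (congr1 (fun u : 'X_{1..n.+1} => u i) E).
rewrite !mnmDE !mulmnE !mnm1E eqxx eq_sym (negbTE i0) (negbTE li) /=; lia.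
Qed.

Lemma mcoeff_Fab_neq0_at (n a b : nat) (k : comNzRingType) (i : 'I_n.+1)
    (u : 'X_{1..n.+1}) :
  i != ord0 -> (0 < u i)%N -> (Fab n a b k)@_u != 0 ->
  u = (U_(ord0) *+ a + U_(i) *+ b)%MM.
Proof.
move=> i0 u_i /mcoeff_Fab_neq0 [l l0 E]; have [eli|nli] := eqVneq l i.
  by rewrite E eli.
move: u_i; rewrite E !mnmDE !mulmnE !mnm1E eq_sym (negbTE i0) (negbTE nli) /=.
lia.
Qed.

Section VanishingPoly.
Variables (n m : nat) (k : idomainType) (P : 'I_m -> 'I_n.+1 -> k).
Variable i : 'I_n.+1.

Definition mixed_points : {set 'I_m} :=
  [set j | (P j i != 0) && [exists l, (l != i) && (P j l != 0)]].

Definition partner (j : 'I_m) : 'I_n.+1 :=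
  odflt i [pick l | (l != i) && (P j l != 0)].

Lemma partnerP j : j \in mixed_points -> (partner j != i) && (P j (partner j) != 0).
Proof.
rewrite inE => /andP [_ /existsP [l hl]]; rewrite /partner.
by case: pickP => [//|/(_ l)]; rewrite hl.
Qed.

Definition vanishing_poly : {mpoly k[n.+1]} :=
  \prod_(j <- enum mixed_points) (P j (partner j) *: 'X_i - P j i *: 'X_(partner j))
  * 'X_[U_(ord0) + U_(i)].

Lemma vanishing_poly_dhomog : vanishing_poly \is (#|mixed_points| + 2).-homog.
Proof.
apply: dhomogM; first by rewrite cardE; apply: dhomog_prod_linear.
rewrite dhomogX; apply/eqP.
by change (mdeg (U_(ord0) + U_(i))%MM = 2%N); rewrite mdegD !mdeg1.
Qed.

Hypothesis i0 : i != ord0.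

Lemma meval_vanishing_poly j : vanishing_poly.@[P j] = 0.
Proof.
rewrite /vanishing_poly mpolyXD !mevalM !mevalXU.
have [jmix|] := boolP (j \in mixed_points).
  rewrite rmorph_prod (bigD1_seq j) ?mem_enum ?enum_uniq //=.
  by rewrite mevalB !mevalZ !mevalXU [P j i * _]mulrC subrr !mul0r.
rewrite inE negb_and negbK => /orP [/eqP ->|/existsPn only_i].
  by rewrite !mulr0.
by move: (only_i ord0); rewrite eq_sym i0 negbK => /eqP ->; rewrite mul0r mulr0.
Qed.

Lemma mcoeff_vanishing_poly :
  vanishing_poly@_(U_(ord0) + U_(i) + U_(i) *+ #|mixed_points|)%MM != 0.
Proof.
rewrite mcoeffMX cardE mcoeff_prod_linear => [|j]; last first.
  by rewrite mem_enum => /partnerP /andP [].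
rewrite prodf_seq_neq0; apply/allP => j; rewrite mem_enum => /partnerP.
by case/andP.
Qed.

Lemma msupp_vanishing_poly u : u \in msupp vanishing_poly -> (0 < u i)%N.
Proof.
rewrite (perm_mem (msuppMX _ _)) => /mapP [u' _ ->].
by rewrite !mnmDE !mnm1E eqxx addn1.
Qed.

End VanishingPoly.

Theorem lemma7p1 (k : closedFieldType) (hchar : [pchar k] =i pred0)
  (n a b : nat) (ha : (1 <= a)%N) (hab : (a + 1 <= b)%N) (hn : (3 <= n)%N)
  (m : nat) (P : 'I_m -> 'I_n.+1 -> k)
  (hP : distinct_points P) (hapo : apolar P (Fab n a b k)) :
  forall i : 'I_n.+1, i != ord0 -> (b <= #|[set j : 'I_m | P j i != 0%R]|)%N.
Proof.
move=> i i0; rewrite leqNgt; apply/negP => few.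
set r := #|mixed_points P i|.
have r_lt_b : (r < b)%N.
  apply: leq_ltn_trans few; apply: subset_leq_card.
  by apply/subsetP => j; rewrite !inE => /andP [].
pose m0 := (U_(ord0) + U_(i) + U_(i) *+ r)%MM.
pose t := (U_(ord0) *+ a.-1 + U_(i) *+ (b - r.+1))%MM.
have m0t : (m0 + t = U_(ord0) *+ a + U_(i) *+ b)%MM.
  apply/mnmP => x; rewrite !mnmDE !mulmnE !mnm1E.
  by case: (ord0 == x); case: (i == x) => /=; lia.
have g_perp : contract (vanishing_poly P i) (Fab n a b k) = 0.
  apply: hapo; apply: ideal_of_points_dhomog (vanishing_poly_dhomog P i) _.
  exact: meval_vanishing_poly.
have Fm0 : (Fab n a b k)@_(m0 + t) != 0.
  by rewrite m0t mcoeff_Fab_pure ?oner_neq0 //; lia.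
have F_others : {in msupp (vanishing_poly P i), forall u,
    u != m0 -> (Fab n a b k)@_(u + t) = 0}.
  move=> u /msupp_vanishing_poly u_i; apply: contraNeq => Fut.
  have ut_i : (0 < (u + t)%MM i)%N by rewrite mnmDE ltn_addr.
  by apply/eqP/(@addIm _ t); rewrite m0t (mcoeff_Fab_neq0_at i0 ut_i Fut).
have := mcoeff_contract_neq0 hchar (mcoeff_vanishing_poly P i) Fm0 F_others.
by rewrite g_perp mcoeff0 eqxx.
Qed.
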